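(* Consider an unlabeled tabletop rearrangement instance whose unlabeled dependency graph is the dependency grid $\mathcal{D}(m,2m)$, and any moment during the execution of a valid plan with external buffers. For a column index $i$ with $1\le i<m$, if $f_i+f_{i+1}\notin\{0,2m\}$, then $c_i+c_{i+1}\ge 1$.
   Context: An unlabeled tabletop rearrangement instance has congruent interchangeable objects, a feasible start arrangement and a feasible goal arrangement (no two placed footprints with intersecting interiors). Its unlabeled dependency graph is bipartite with a start vertex per start pose and a goal vertex per goal pose, adjacent iff footprints at those poses overlap. In a valid plan with external buffers each object is picked from its start pose exactly once and placed either at an unoccupied goal pose or into an external buffer (later moved from the buffer to an unoccupied goal pose); an object may be placed at a goal pose only if it overlaps no object currently in the workspace, so a goal vertex can be occupied only after the objects at all adjacent start vertices have been picked. The dependency grid $\mathcal{D}(w,h)$ has vertices $v_{x,y}$, $1\le x\le w$ (column), $1\le y\le h$ (row), with $v_{x,y}$, $v_{x',y'}$ adjacent iff $|x-x'|+|y-y'|=1$; $v_{x,y}$ is a start vertex if $x+y$ is even and a goal vertex otherwise. In $\mathcal{D}(m,2m)$ the vertex pair $p_{i,j}$ ($1\le i,j\le m$) is $\{v_{i,2j-1},v_{i,2j}\}$; it contains one start and one goal vertex. At a given moment, a goal vertex is filled if an object is placed at the corresponding goal pose; a start vertex is cleared if the object originally at it has been picked but the goal vertex in the same vertex pair is not filled. For column $i$, $f_i$ is the number of filled goal vertices and $c_i$ the number of cleared start vertices in column $i$. *)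

From mathcomp Require Import all_boot.
Set Implicit Arguments. Unset Strict Implicit. Unset Printing Implicit Defensive.

(* Dependency grid D(m, 2m), 0-indexed: the vertex (x, y) : 'I_m * 'I_(2m)
   stands for v_{x+1, y+1} (column x+1, row y+1). *)
Definition V (m : nat) := ('I_m * 'I_(2 * m))%type.

Section Grid.
Variable m : nat.

(* v_{x,y} is a start vertex iff x + y is even ((x+1)+(y+1) has the same parity). *)
Definition is_start (v : V m) : bool := ~~ odd (v.1 + v.2).
Definition is_goal (v : V m) : bool := odd (v.1 + v.2).

Definition adj (u v : V m) : bool :=
  ((nat_of_ord u.1 == v.1) && ((u.2.+1 == v.2) || (v.2.+1 == u.2)))
  || ((nat_of_ord u.2 == v.2) && ((u.1.+1 == v.1) || (v.1.+1 == u.1))).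

(* u and v belong to the same vertex pair p_{i,j} = {v_{i,2j-1}, v_{i,2j}}
   (0-indexed rows 2(j-1), 2(j-1)+1). *)
Definition same_pair (u v : V m) : bool :=
  (nat_of_ord u.1 == v.1) && ((u.2)./2 == (v.2)./2).

(* State of an execution with external buffers (objects are interchangeable,
   so the buffer is described by the number of objects it holds). *)
Record state := State {
  picked : {set V m};
  filled : {set V m};
  buf : nat
}.

Definition init_state : state := State set0 set0 0.

Inductive action :=
| PickToGoal of V m & V m
| PickToBuffer of V m
| BufferToGoal of V m.

(* A goal g may be filled only if it is unoccupied and no object currently in
   the workspace overlaps it, i.e. every adjacent start vertex is already
   picked (the object being moved, at start s, counts as picked). *)
Definition step (a : action) (st : state) : option state :=
  match a with
  | PickToGoal s g =>
      if [&& is_start s, s \notin picked st, is_goal g, g \notin filled st &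
             [forall u, (is_start u && adj u g) ==> (u \in s |: picked st)]]
      then Some (State (s |: picked st) (g |: filled st) (buf st))
      else None
  | PickToBuffer s =>
      if is_start s && (s \notin picked st)
      then Some (State (s |: picked st) (filled st) (buf st).+1)
      else None
  | BufferToGoal g =>
      if [&& 0 < buf st, is_goal g, g \notin filled st &
             [forall u, (is_start u && adj u g) ==> (u \in picked st)]]
      then Some (State (picked st) (g |: filled st) (buf st).-1)
      else None
  end.

Fixpoint exec (p : seq action) (st : state) : option state :=
  match p with
  | [::] => Some st
  | a :: p' => if step a st is Some st' then exec p' st' else None
  end.

Definition valid_plan (p : seq action) : Prop :=
  exists st, exec p init_state = Some st /\
    picked st = [set v | is_start v] /\
    filled st = [set v | is_goal v] /\ buf st = 0.

Definition f_col (st : state) (i : nat) : nat :=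
  #|[set g in filled st | is_goal g && (nat_of_ord g.1 == i)]|.

Definition cleared (st : state) (s : V m) : bool :=
  [&& is_start s, s \in picked st &
      ~~ [exists g, [&& is_goal g, same_pair s g & g \in filled st]]].

Definition c_col (st : state) (i : nat) : nat :=
  #|[set s | cleared st s && (nat_of_ord s.1 == i)]|.

End Grid.

(* A goal can be filled only once every adjacent start is picked, and a picked
   start that is not cleared has the goal of its own vertex pair filled. So if
   no start of columns i, i+1 is cleared, filled pairs spread: sideways between
   the two columns, upwards in the column whose goals are the upper vertices of
   their pairs, and downwards in the other one. A single filled pair thus fills
   both columns completely, which forces f_i + f_{i+1} = 2m. *)
From mathcomp Require Import all_boot zify.
Set Implicit Arguments. Unset Strict Implicit. Unset Printing Implicit Defensive.

Lemma propagate_up (P : nat -> Prop) n :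
  (forall j, j.+1 < n -> P j -> P j.+1) -> forall j k, j <= k < n -> P j -> P k.
Proof.
move=> stepP j; elim=> [|k IH] /andP[le_jk lt_kn] Pj.
  by move: Pj; have -> : j = 0 by lia.
have [<- //|le_jk'] : j = k.+1 \/ j <= k by lia.
by apply: (stepP k lt_kn); apply: IH Pj; rewrite le_jk' /=; lia.
Qed.

Lemma propagate_down (P : nat -> Prop) :
  (forall j, P j.+1 -> P j) -> forall j k, k <= j -> P j -> P k.
Proof.
move=> stepP; elim=> [|j IH] k le_kj Pj.
  by have -> : k = 0 by lia.
have [-> //|le_kj'] : k = j.+1 \/ k <= j by lia.
exact: IH le_kj' (stepP _ Pj).
Qed.

Section Grid.
Variable m : nat.
Implicit Types (st : state m) (g u : V m) (a : action m).

Definition goals_guarded st :=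
  forall g u, g \in filled st -> is_start u -> adj u g -> u \in picked st.

Lemma step_guarded a st st' :
  step a st = Some st' -> goals_guarded st -> goals_guarded st'.
Proof.
case: a => [s g|s|g] /=.
- case: ifP => // /and5P[_ _ _ _ /forallP guard_g] [<-] guarded g' u /=.
  rewrite !in_setU1 => /orP[/eqP-> start_u adj_ug|filled_g' start_u adj_ug].
    by have := guard_g u; rewrite start_u adj_ug in_setU1.
  by rewrite (guarded g') ?orbT.
- case: ifP => // _ [<-] guarded g' u /= filled_g' start_u adj_ug.
  by rewrite in_setU1 (guarded g') ?orbT.
- case: ifP => // /and4P[_ _ _ /forallP guard_g] [<-] guarded g' u /=.
  rewrite in_setU1 => /orP[/eqP-> start_u adj_ug|filled_g' start_u adj_ug].
    by have := guard_g u; rewrite start_u adj_ug.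
  exact: guarded filled_g' start_u adj_ug.
Qed.

Lemma exec_guarded q st st' :
  exec q st = Some st' -> goals_guarded st -> goals_guarded st'.
Proof.
elim: q st => [|a q IH] st /=; first by case=> <-.
case E: (step a st) => [st1|] // /IH exec_q guarded.
exact/exec_q/(step_guarded E).
Qed.

Lemma reachable_guarded q st : exec q (init_state m) = Some st -> goals_guarded st.
Proof. by move/exec_guarded; apply=> g u; rewrite in_set0. Qed.

Lemma goal_same_pair_inj g g' : is_goal g -> is_goal g' -> same_pair g g' -> g = g'.
Proof.
case: g g' => [x y] [x' y'] /=; rewrite /is_goal /same_pair /=.
move=> goal_g goal_g' /andP[/eqP/val_inj eq_x /eqP eq_half]; subst x'.
by congr pair; apply: val_inj; move: goal_g goal_g' eq_half => /=; lia.
Qed.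

Definition pair_filled st (x j : nat) : Prop :=
  exists2 g, g \in filled st & [/\ is_goal g, nat_of_ord g.1 = x & g.2./2 = j].

Definition column_uncleared st (x : nat) : Prop :=
  forall s : V m, nat_of_ord s.1 = x -> ~~ cleared st s.

Lemma column_uncleared_c_col0 st x : c_col st x = 0 -> column_uncleared st x.
Proof.
move=> c0 s col_s; apply/negP => cleared_s.
by have := card0_eq c0 s; rewrite inE cleared_s col_s eqxx.
Qed.

Lemma f_col_gt0_pair_filled st x :
  0 < f_col st x -> exists2 j, j < m & pair_filled st x j.
Proof.
case/card_gt0P=> g; rewrite inE => /andP[filled_g /andP[goal_g /eqP col_g]].
by exists g.2./2; [have := ltn_ord g.2; lia | exists g].
Qed.

Lemma f_col_full st x : (forall j, j < m -> pair_filled st x j) -> f_col st x = m.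
Proof.
move=> full; set A := [set g in filled st | is_goal g && (nat_of_ord g.1 == x)].
have half_lt (g : V m) : g.2./2 < m by have := ltn_ord g.2; lia.
pose half g : 'I_m := Ordinal (half_lt g).
have half_inj : {in A &, injective half}.
  move=> g g'; rewrite !inE => /and3P[_ goal_g /eqP col_g] /and3P[_ goal_g' /eqP col_g'].
  move=> /(congr1 val) /= eq_half; apply: goal_same_pair_inj => //.
  by rewrite /same_pair col_g col_g' eq_half !eqxx.
rewrite /f_col -/A -(card_in_imset half_inj).
suff -> : [set half g | g in A] = setT by rewrite cardsT card_ord.
apply/setP => j; rewrite inE.
have [g filled_g [goal_g col_g half_g]] := full j (ltn_ord j).
by apply/imsetP; exists g; [rewrite !inE filled_g goal_g col_g eqxx | apply: val_inj].
Qed.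

Section Spreading.
Variable st : state m.
Hypothesis guarded : goals_guarded st.

Lemma uncleared_start_pair_filled g u :
  g \in filled st -> is_start u -> adj u g -> ~~ cleared st u ->
  pair_filled st u.1 u.2./2.
Proof.
move=> filled_g start_u adj_ug.
rewrite /cleared start_u (guarded filled_g start_u adj_ug) negbK.
by case/existsP=> g' /and3P[goal_g' /andP[/eqP col /eqP half] filled_g']; exists g'.
Qed.

Lemma pair_filled_sideways x x' j :
  x' < m -> (x.+1 == x') || (x'.+1 == x) -> column_uncleared st x' ->
  pair_filled st x j -> pair_filled st x' j.
Proof.
move=> lt_x'm adj_x unclr [g filled_g [goal_g col_g <-]].
pose u : V m := (Ordinal lt_x'm, g.2).
apply: (uncleared_start_pair_filled (u := u) filled_g); last exact: unclr.
- by move: goal_g adj_x; rewrite /is_start /is_goal /= col_g; lia.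
- by rewrite /adj /u /= eqxx col_g; move: adj_x; lia.
Qed.

Lemma pair_filled_up x j :
  ~~ odd x -> j.+1 < m -> column_uncleared st x ->
  pair_filled st x j -> pair_filled st x j.+1.
Proof.
move=> even_x lt_jm unclr [g filled_g [goal_g col_g half_g]].
have lt_row : g.2.+1 < 2 * m by move: goal_g; rewrite /is_goal col_g; lia.
pose u : V m := (g.1, Ordinal lt_row).
have [|||g' filled_g' [goal_g' col_g' half_g']] :=
  uncleared_start_pair_filled (u := u) filled_g.
- by move: goal_g; rewrite /is_start /is_goal /= col_g; lia.
- by rewrite /adj /u /= !eqxx orbT.
- by apply: unclr.
exists g' => //; split=> //; first by rewrite -col_g.
by rewrite half_g'; move: goal_g half_g; rewrite /is_goal /= col_g; lia.
Qed.

Lemma pair_filled_down x j :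
  odd x -> column_uncleared st x -> pair_filled st x j.+1 -> pair_filled st x j.
Proof.
move=> odd_x unclr [g filled_g [goal_g col_g half_g]].
have lt_row : g.2.-1 < 2 * m by have := ltn_ord g.2; lia.
pose u : V m := (g.1, Ordinal lt_row).
have [|||g' filled_g' [goal_g' col_g' half_g']] :=
  uncleared_start_pair_filled (u := u) filled_g.
- by move: goal_g half_g; rewrite /is_start /is_goal /= col_g; lia.
- have pos_row : 0 < g.2 by move: half_g; lia.
  by rewrite /adj /u /= prednK // !eqxx.
- by apply: unclr.
exists g' => //; split=> //; first by rewrite -col_g.
by rewrite half_g'; move: goal_g half_g; rewrite /is_goal /= col_g; lia.
Qed.

Lemma even_odd_columns_full xe xo :
  ~~ odd xe -> odd xo -> (xe.+1 == xo) || (xo.+1 == xe) -> xe < m -> xo < m ->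
  column_uncleared st xe -> column_uncleared st xo ->
  (exists2 j, j < m & pair_filled st xe j \/ pair_filled st xo j) ->
  forall j, j < m -> pair_filled st xe j /\ pair_filled st xo j.
Proof.
move=> even_xe odd_xo adj_x lt_xem lt_xom unclr_e unclr_o [j0 lt_j0m seed].
have adj_x' : (xo.+1 == xe) || (xe.+1 == xo) by rewrite orbC.
have to_o j : pair_filled st xe j -> pair_filled st xo j.
  exact: pair_filled_sideways lt_xom adj_x unclr_o.
have to_e j : pair_filled st xo j -> pair_filled st xe j.
  exact: pair_filled_sideways lt_xem adj_x' unclr_e.
have up j : j.+1 < m -> pair_filled st xe j -> pair_filled st xe j.+1.
  by move=> lt_jm; apply: pair_filled_up.
have down j : pair_filled st xo j.+1 -> pair_filled st xo j.
  exact: pair_filled_down.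
have top_e : pair_filled st xe m.-1.
  apply: (propagate_up up (j := j0)); first lia.
  by case: seed => // /to_e.
have top_o := to_o _ top_e.
move=> j lt_jm; have bottom_o : pair_filled st xo j.
  by apply: (propagate_down down (j := m.-1)) top_o; lia.
by split=> //; apply: to_e.
Qed.

Lemma adjacent_columns_full x :
  x.+1 < m -> column_uncleared st x -> column_uncleared st x.+1 ->
  (exists2 j, j < m & pair_filled st x j \/ pair_filled st x.+1 j) ->
  forall j, j < m -> pair_filled st x j /\ pair_filled st x.+1 j.
Proof.
move=> lt_x1m unclr unclr1 seed j lt_jm.
have lt_xm : x < m by lia.
have [odd_x|even_x] := boolP (odd x).
- have [] // := even_odd_columns_full _ odd_x _ lt_x1m lt_xm unclr1 unclr _ lt_jm.
  + by rewrite /= odd_x.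
  + by rewrite eqxx orbT.
  + by case: seed => j0 lt_j0m seed; exists j0 => //; rewrite or_comm.
- apply: (even_odd_columns_full even_x _ _ lt_xm lt_x1m unclr unclr1 seed lt_jm).
  + by rewrite /= even_x.
  + by rewrite eqxx.
Qed.

End Spreading.
End Grid.

(* Columns are 0-indexed, so i here is the paper's i - 1; a "moment" is the
   state after the first k actions of p. *)
Theorem lemma3 (m : nat) (p : seq (action m)) (k : nat) (st : state m) (i : nat) :
  valid_plan p ->
  k <= size p ->
  exec (take k p) (init_state m) = Some st ->
  i.+1 < m ->
  f_col st i + f_col st i.+1 \notin [:: 0; 2 * m] ->
  1 <= c_col st i + c_col st i.+1.
Proof.
(* Only reachability of st matters: the bound holds at every reachable state. *)
move=> _ _ /reachable_guarded guarded lt_i1m f_not_extreme.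
rewrite lt0n addn_eq0; apply/negP => /andP[/eqP c0 /eqP c1].
have seed : exists2 j, j < m & pair_filled st i j \/ pair_filled st i.+1 j.
  have [f0|/f_col_gt0_pair_filled[j lt_jm]] := posnP (f_col st i).
    have [f1|/f_col_gt0_pair_filled[j lt_jm]] := posnP (f_col st i.+1).
      by move: f_not_extreme; rewrite f0 f1.
    by exists j => //; right.
  by exists j => //; left.
have full := adjacent_columns_full guarded lt_i1m
  (column_uncleared_c_col0 c0) (column_uncleared_c_col0 c1) seed.
move: f_not_extreme.
rewrite !f_col_full => [|j /full[] //|j /full[] //].
by rewrite addnn -mul2n !inE eqxx orbT.
Qed.
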